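(* $\mathrm{WM}\preceq F_{\mathrm{weak}}\preceq \mathrm{WL}_{3/2}$. That is, for all graphs $G,H$: if $\mathrm{WL}_{3/2}(G)=\mathrm{WL}_{3/2}(H)$ then $F_{\mathrm{weak}}(G)=F_{\mathrm{weak}}(H)$, and if $F_{\mathrm{weak}}(G)=F_{\mathrm{weak}}(H)$ then $\mathrm{WM}(G)=\mathrm{WM}(H)$.
   Context: Graphs are finite, simple and undirected; an $n$-vertex graph $G$ has $V(G)=\{1,\dots,n\}$ and adjacency matrix $A$. $\mathrm{Spec}(G)$ is the multiset of eigenvalues of $A$. Let $\mu_1<\dots<\mu_m$ be the distinct eigenvalues, $P_i$ the orthogonal projection matrix onto the eigenspace of $\mu_i$, $P_*(x,y)=(P_1(x,y),\dots,P_m(x,y))$. Fürer's weak spectral invariant is $F_{\mathrm{weak}}(G)=\big(\mathrm{Spec}(G),\{\!\{(P_*(x,x),\{\!\{P_*(x,y)\}\!\}_{y\in V(G)})\}\!\}_{x\in V(G)}\big)$, where $\{\!\{\cdot\}\!\}$ denotes a multiset. Let $w_k(x,y)$ be the number of walks of length $k$ from $x$ to $y$. The walk matrix has entries $W(x,k)=\sum_{y}w_k(x,y)$ for $0\le k\le n-1$, and $\mathrm{WM}(G)=\{\!\{(W(x,0),\dots,W(x,n-1))\}\!\}_{x\in V(G)}$. Color refinement (1-WL) on a vertex-colored graph: $C^0(x)$ is the color of $x$ (uniform if the graph is uncolored), and $C^{r+1}(x)=\big(C^r(x),\{\!\{C^r(y)\}\!\}_{y\in N(x)}\big)$, where $N(x)$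 is the neighborhood. $\mathrm{WL}_1(G)=\{\!\{C^n(x)\}\!\}_{x\in V(G)}$. For a vertex $x$, $G_x$ is $G$ with $x$ individualized, i.e. $x$ receives a special new color (the same special color for every choice of $x$) and the other vertices keep their colors. $\mathrm{WL}_{3/2}(G)=\{\!\{\mathrm{WL}_1(G_x)\}\!\}_{x\in V(G)}$. *)

From HB Require Import structures.
From mathcomp Require Import all_boot all_order all_algebra all_field.
Set Implicit Arguments.
Unset Strict Implicit.
Unset Printing Implicit Defensive.
Import Order.TTheory GRing.Theory Num.Theory.

(* A finite multiset over a countable type is represented canonically by
   the list of its elements sorted along the injective encoding [pickle];
   two lists give the same [mset] iff they are permutations of each other.
   Hence "multiset {{ ... }} equal" is Leibniz equality of [mset]s. *)
Definition mset (T : countType) (s : seq T) : seq T :=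
  sort (fun a b : T => (pickle a <= pickle b)%N) s.

Record graph := Graph {
  gn : nat;
  gadj : rel 'I_gn;
  gadj_sym : symmetric gadj;
  gadj_irr : irreflexive gadj }.

Section GraphInvariants.
Variable G : graph.
Local Notation n := (gn G).
Local Notation V := ('I_n).
Local Notation e := (@gadj G).

Definition nwalks (k : nat) (x y : V) : nat :=
  #|[pred s : k.-tuple V | path e x s && (last x s == y)]|.

Definition Wm (x : V) (k : nat) : nat := \sum_(y : V) nwalks k x y.

Definition WM : seq (seq nat) :=
  mset [seq [seq Wm x k | k <- iota 0 n] | x <- enum V].

Local Open Scope ring_scope.

Definition adjmx : 'M[algC]_n := \matrix_(i, j) (e i j)%:R.

Definition spectrum : seq algC :=
  mset (sval (closed_field_poly_normal (char_poly adjmx))).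

(* distinct eigenvalues mu_1 < ... < mu_m (they are real) *)
Definition distinct_eigs : seq algC := sort <=%R (undup spectrum).

(* orthogonal (Hermitian) projection onto the row space of E:
   with M := (row_base E)^T (columns form a basis), P = M (M^* M)^-1 M^*. *)
Definition orthproj (E : 'M[algC]_n) : 'M[algC]_n :=
  let B := row_base E in
  (B^T *m invmx (map_mx Num.conj B *m B^T)) *m map_mx Num.conj B.

Definition eigproj (mu : algC) : 'M[algC]_n := orthproj (eigenspace adjmx mu).

Definition Pstar (x y : V) : seq algC :=
  [seq eigproj mu x y | mu <- distinct_eigs].

Definition Fweak : seq algC * seq (seq algC * seq (seq algC)) :=
  (spectrum,
   mset [seq (Pstar x x, mset [seq Pstar x y | y <- enum V]) | x <- enum V]).

Local Close Scope ring_scope.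

(* Colours are finite trees: initial colour [GenTree.Leaf c];
   C^{r+1}(x) = (C^r(x), {{C^r(y)}}_{y in N(x)}) is encoded injectively as
   [GenTree.Node 0 (C^r(x) :: mset [seq C^r y | y in N(x)])]. *)
Definition color := GenTree.tree nat.

Fixpoint refine (c0 : V -> nat) (r : nat) (x : V) : color :=
  match r with
  | 0 => GenTree.Leaf (c0 x)
  | r'.+1 => GenTree.Node 0
      (refine c0 r' x :: mset [seq refine c0 r' y | y <- enum V & e x y])
  end.

Definition WL1_col (c0 : V -> nat) : seq color :=
  mset [seq refine c0 n x | x <- enum V].

Definition WL1 : seq color := WL1_col (fun _ => 0%N).

Definition indiv (x : V) : V -> nat := fun y => if y == x then 1%N else 0%N.

Definition WL32 : seq (seq color) :=
  mset [seq WL1_col (indiv x) | x <- enum V].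

End GraphInvariants.

(* After individualizing x, colour refinement records in the colour of y the
   number of walks of length k from y to x, for k up to the number of rounds.
   Hence WL_{3/2} determines the multiset over x of the walk profiles
   (w(x,x), {{w(x,y)}}_y), where w(x,y) = (w_k(x,y))_{k <= n}.  Summing the
   diagonal entries gives tr A^k for k <= n, hence, by Newton's identities, the
   characteristic polynomial and the spectrum.  As A is real symmetric, its
   eigenprojection P_mu is L_mu(A) for the Lagrange basis polynomial L_mu on the
   distinct eigenvalues, so P_*(x,y) is a fixed linear image of w(x,y) and
   F_weak is a function of the spectrum and of the walk profiles.  Conversely,
   A^k = sum_mu mu^k P_mu gives W(x,k) = sum_y sum_mu mu^k P_mu(x,y). *)

From mathcomp Require Import all_boot all_order all_algebra all_field.
From mathcomp Require Import ring zify.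

Set Implicit Arguments.
Unset Strict Implicit.
Unset Printing Implicit Defensive.
Import Order.TTheory GRing.Theory Num.Theory.

Section Multisets.
Variable T : countType.

Lemma msetP (s t : seq T) : reflect (mset s = mset t) (perm_eq s t).
Proof.
apply: (perm_sortP (leT := fun a b : T => pickle a <= pickle b)) => [a b|a b c|a b].
- exact: leq_total.
- exact: leq_trans.
- by rewrite -eqn_leq => /eqP/(pcan_inj (@pickleK_inv T)).
Qed.

Lemma perm_mset (s : seq T) : perm_eq (mset s) s.
Proof. by rewrite /mset perm_sort. Qed.

Lemma size_mset (s : seq T) : size (mset s) = size s.
Proof. exact: size_sort. Qed.

End Multisets.

Lemma mset_map (T U : countType) (f : T -> U) (s t : seq T) :
  mset s = mset t -> mset (map f s) = mset (map f t).
Proof. by move/msetP => st; apply/msetP/perm_map. Qed.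

Lemma mset_map_mset (T U : countType) (f : T -> U) (s : seq T) :
  mset (map f (mset s)) = mset (map f s).
Proof. exact/msetP/perm_map/perm_mset. Qed.

Lemma mset_map_inj (T U : countType) (f : T -> U) (s t : seq T) : injective f ->
  mset (map f s) = mset (map f t) -> mset s = mset t.
Proof. by move=> f_inj /msetP/(perm_map_inj f_inj)/msetP. Qed.

Section Walks.
Variable G : graph.
Local Notation n := (gn G).
Local Notation V := ('I_n).
Local Notation e := (@gadj G).

Lemma nwalksE k (x y : V) :
  nwalks k x y = \sum_(s : k.-tuple V) (path e x s && (last x s == y)).
Proof.
rewrite /nwalks -sum1_card big_mkcond /=; apply: eq_bigr => s _.
by rewrite inE; case: ifP.
Qed.

Lemma nwalks0 (x y : V) : nwalks 0 x y = (x == y).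
Proof.
rewrite nwalksE (big_pred1 [tuple]) //= => s.
by rewrite (tuple0 s); apply/esym/eqP/val_inj.
Qed.

Lemma nwalksS k (x y : V) : nwalks k.+1 x y = \sum_(z : V) e x z * nwalks k z y.
Proof.
rewrite nwalksE (reindex (fun p : V * k.-tuple V => [tuple of p.1 :: p.2])) /=; last first.
  exists (fun s : k.+1.-tuple V => (thead s, behead_tuple s)) => [[z t] _|s _] /=.
    by congr (_, _); apply: val_inj.
  by apply: val_inj; case: s => [[|a s] //= _].
rewrite -(pair_big xpredT xpredT (fun z (t : k.-tuple V) =>
  nat_of_bool ((e x z && path e z t) && (last z t == y)))) /=.
apply: eq_bigr => z _; rewrite nwalksE big_distrr /=; apply: eq_bigr => t _.
by rewrite -andbA; case: (e x z); rewrite ?mul1n ?mul0n.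
Qed.

Definition walk_vector (x y : V) : seq nat := [seq nwalks k x y | k <- iota 0 n.+1].

Definition walk_profile (x : V) : seq nat * seq (seq nat) :=
  (walk_vector x x, mset [seq walk_vector x y | y <- enum V]).

Lemma closed_walks_profiles k : k <= n ->
  \sum_(x : V) nwalks k x x =
  sumn [seq nth 0 p.1 k | p <- mset [seq walk_profile x | x <- enum V]].
Proof.
move=> kn; rewrite (perm_sumn (perm_map _ (perm_mset _))) -map_comp sumnE.
rewrite big_map big_enum.
by apply: eq_bigr => x _; rewrite /= (nth_map 0) ?size_iota ?nth_iota.
Qed.

End Walks.

Fixpoint marked (t : color) : bool :=
  match t with
  | GenTree.Leaf c => c == 1
  | GenTree.Node _ (c :: _) => marked c
  | _ => false
  end.

Fixpoint marked_walks (k : nat) (t : color) : nat :=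
  match k, t with
  | 0, _ => marked t
  | k'.+1, GenTree.Node _ (_ :: l) => sumn (map (marked_walks k') l)
  | _, _ => 0
  end.

Section Colours.
Variable G : graph.
Local Notation n := (gn G).
Local Notation V := ('I_n).
Local Notation e := (@gadj G).

Lemma marked_refine (c0 : V -> nat) r y : marked (refine c0 r y) = (c0 y == 1).
Proof. by elim: r. Qed.

Lemma marked_walks_refine (x : V) k r (y : V) : k <= r ->
  marked_walks k (refine (indiv x) r y) = nwalks k y x.
Proof.
elim: k r y => [|k IH] r y kr.
  by rewrite /= marked_refine nwalks0 /indiv; case: (y == x).
case: r kr => // r kr; rewrite /= (perm_sumn (perm_map _ (perm_mset _))) -map_comp.
rewrite (eq_map (g := fun z => nwalks k z x)) => [|z /=]; last exact: IH.
rewrite sumnE big_map big_filter big_mkcond big_enum nwalksS /=.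
by apply: eq_bigr => z _; case: (e y z); rewrite ?mul1n ?mul0n.
Qed.

End Colours.

Local Open Scope ring_scope.

Lemma coef_quot_XsubC (R : comNzRingType) (P Q : {poly R}) x N :
  P = Q * ('X - x%:P) -> (size Q <= N)%N ->
  forall j, Q`_j = \sum_(k < N) P`_(j + k.+1) * x ^+ k.
Proof.
move=> PQ sQ j.
have coefQS i : Q`_i = P`_i.+1 + x * Q`_i.+1.
  by rewrite PQ mulrBr coefB coefMX coefMC /=; ring.
suff unroll t : Q`_j = \sum_(k < t) P`_(j + k.+1) * x ^+ k + Q`_(j + t) * x ^+ t.
  by rewrite (unroll N) nth_default ?mul0r ?addr0 // (leq_trans sQ (leq_addl _ _)).
elim: t => [|t IH]; first by rewrite big_ord0 add0r addn0 mulr1.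
by rewrite IH big_ord_recr /= coefQS -addrA addnS exprSr; congr (_ + _); ring.
Qed.

Section NewtonIdentities.
Variable R : numFieldType.
Implicit Types (a b : seq R) (x : R).

Local Notation piX a := (\prod_(x <- a) ('X - x%:P)).

Definition power_sum a (k : nat) : R := \sum_(x <- a) x ^+ k.

Lemma power_sum0 a : power_sum a 0 = (size a)%:R.
Proof.
elim: a => [|x a IH]; first by rewrite /power_sum big_nil.
by rewrite /power_sum big_cons -/(power_sum a 0) IH expr0 -natr1 addrC.
Qed.

Lemma deriv_prod_XsubC a : (piX a)^`() = \sum_(x <- a) piX a %/ ('X - x%:P).
Proof.
elim: a => [|y a IH]; first by rewrite !big_nil derivC.
rewrite !big_cons derivM derivXsubC mul1r mulKp ?polyXsubC_eq0 // IH big_distrr.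
congr (_ + _); rewrite big_seq_cond [RHS]big_seq_cond; apply: eq_bigr => x.
case/andP=> xa _; have /divpK {2}<- : ('X - x%:P) %| piX a.
  by rewrite dvdp_XsubCl root_prod_XsubC.
by rewrite mulrA mulpK ?polyXsubC_eq0.
Qed.

(* The case [i = 0] expresses that every [x \in a] is a root of [piX a]; for
   [i > 0] the left-hand side is the coefficient of the derivative, computed
   by synthetic division of [piX a] by each of its linear factors. *)
Lemma newton_identity a (i : nat) :
  i%:R * (piX a)`_i = \sum_(k < (size a).+1) (piX a)`_(i + k) * power_sum a k.
Proof.
set N := (size a).+1.
have swap F : \sum_(k < N) (piX a)`_(F k) * power_sum a k =
    \sum_(x <- a) \sum_(k < N) (piX a)`_(F k) * x ^+ k.
  by rewrite exchange_big; apply: eq_bigr => k _; rewrite big_distrr.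
case: i => [|j].
  rewrite mul0r (swap (fun k : 'I_N => 0 + k)%N) big_seq big1 // => x xa.
  have : root (piX a) x by rewrite root_prod_XsubC.
  rewrite /root (@horner_coef_wide _ N) ?size_prod_XsubC // => /eqP root_x.
  by rewrite -[RHS]root_x; apply: eq_bigr => k _; rewrite add0n.
rewrite mulr_natl -coef_deriv deriv_prod_XsubC coef_sum.
rewrite (swap (fun k : 'I_N => j.+1 + k)%N) big_seq [RHS]big_seq.
apply: eq_bigr => x xa; rewrite (@coef_quot_XsubC _ (piX a) _ x N) //.
- by apply: eq_bigr => k _; rewrite addSnnS.
- by apply/esym/divpK; rewrite dvdp_XsubCl root_prod_XsubC.
- by rewrite (leq_trans (leq_divp _ _)) // size_prod_XsubC.
Qed.

(* Newton's identities determine the coefficients from the top down, the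
   coefficient of index i being divided by i - size a, which is nonzero in
   characteristic zero. *)
Lemma eq_prod_XsubC_power_sum a b : size a = size b ->
  (forall k, (0 < k <= size a)%N -> power_sum a k = power_sum b k) ->
  piX a = piX b.
Proof.
move=> sab eq_ps; set n := size a.
have eq_ps' k : (k < n.+1)%N -> power_sum a k = power_sum b k.
  case: k => [_|k kn]; first by rewrite !power_sum0 sab.
  by apply: eq_ps; rewrite ltnS in kn; rewrite kn.
suff eq_coef t i : (n <= i + t)%N -> (piX a)`_i = (piX b)`_i.
  by apply/polyP => i; apply: (eq_coef n); rewrite leq_addl.
elim: t i => [|t IH] i.
  rewrite addn0 leq_eqVlt => /orP[/eqP <-|ni].
    have := lead_coef_prod_XsubC a xpredT id.
    have := lead_coef_prod_XsubC b xpredT id.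
    by rewrite !lead_coefE !size_prod_XsubC -sab /= => -> ->.
  by rewrite !nth_default // size_prod_XsubC -?sab.
rewrite addnS => nit; have [|int] := leqP n (i + t); first exact: IH.
have e1 := newton_identity a i; have e2 := newton_identity b i.
rewrite -sab -/n in e2; rewrite -/n in e1.
move: e1 e2; rewrite !big_ord_recl /= !addn0 !power_sum0 -sab -/n.
have -> : \sum_(k < n) (piX a)`_(i + bump 0 k) * power_sum a (bump 0 k) =
          \sum_(k < n) (piX b)`_(i + bump 0 k) * power_sum b (bump 0 k).
  apply: eq_bigr => k _; rewrite eq_ps' ?ltnS //; congr (_ * _).
  by apply: IH; rewrite /bump /=; lia.
move=> e1 e2; have : (i%:R - n%:R) * (piX a)`_i = (i%:R - n%:R) * (piX b)`_i.
  by rewrite !mulrBl e1 e2; ring.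
by apply/mulfI; rewrite subr_eq0 eqr_nat neq_ltn; lia.
Qed.

End NewtonIdentities.

Section Lagrange.
Variables (F : fieldType) (s : seq F).

Definition lagrange (mu : F) : {poly F} :=
  (\prod_(nu <- s | nu != mu) (mu - nu))^-1 *:
    \prod_(nu <- s | nu != mu) ('X - nu%:P).

Lemma horner_lagrange mu x : (lagrange mu).[x] =
  (\prod_(nu <- s | nu != mu) (mu - nu))^-1 * \prod_(nu <- s | nu != mu) (x - nu).
Proof.
rewrite hornerZ horner_prod; congr (_ * _).
by apply: eq_bigr => nu _; rewrite hornerXsubC.
Qed.

Lemma lagrange_self mu : (lagrange mu).[mu] = 1.
Proof.
rewrite horner_lagrange mulVf // prodf_seq_neq0; apply/allP => nu _.
by apply/implyP; rewrite subr_eq0 eq_sym.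
Qed.

Lemma lagrange_other mu x : uniq s -> x \in s -> x != mu -> (lagrange mu).[x] = 0.
Proof.
move=> s_uniq xs x_mu; apply/eqP; rewrite horner_lagrange mulf_eq0; apply/orP; right.
rewrite -big_filter (bigD1_seq x) /= ?subrr ?mul0r ?mem_filter ?x_mu //.
exact: filter_uniq.
Qed.

Lemma size_lagrange mu : (size (lagrange mu) <= (size s).+1)%N.
Proof.
rewrite (leq_trans (size_scale_leq _ _)) // -big_filter size_prod_XsubC.
by rewrite ltnS size_filter count_size.
Qed.

End Lagrange.

Lemma lagrange_real (R : numFieldType) (s : seq R) mu :
  {subset s <= Num.real} -> mu \is Num.real -> lagrange s mu \is a polyOver Num.real.
Proof.
move=> s_real mu_real; apply: polyOverZ.
  rewrite rpredV big_seq_cond rpred_prod // => nu /andP[/s_real nu_real _].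
  by rewrite rpredB.
rewrite big_seq_cond rpred_prod // => nu /andP[/s_real nu_real _].
by rewrite polyOverXsubC.
Qed.

Section PolyMx.
Variables (R : comNzRingType) (n : nat) (A : 'M[R]_n).
Implicit Types p q : {poly R}.

Definition poly_mx p : 'M[R]_n := \sum_(i < size p) p`_i *: A ^+ i.

Lemma poly_mx_wide p N : (size p <= N)%N -> poly_mx p = \sum_(i < N) p`_i *: A ^+ i.
Proof.
move=> sp; rewrite /poly_mx (big_ord_widen N (fun i => p`_i *: A ^+ i)) //.
rewrite big_mkcond; apply: eq_bigr => i _; case: ifP => // /negbT.
by rewrite -leqNgt => pi; rewrite nth_default // scale0r.
Qed.

Lemma poly_mx_entry p N (i j : 'I_n) : (size p <= N)%N ->
  poly_mx p i j = \sum_(k < N) p`_k * (A ^+ k) i j.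
Proof.
by move=> sp; rewrite (poly_mx_wide sp) summxE; apply: eq_bigr => k _; rewrite mxE.
Qed.

Lemma poly_mxXn k : poly_mx 'X^k = A ^+ k.
Proof.
rewrite (@poly_mx_wide _ k.+1) ?size_polyXn // big_ord_recr /= coefXn eqxx scale1r.
by rewrite big1 ?add0r // => i _; rewrite coefXn ltn_eqF ?scale0r.
Qed.

Lemma poly_mxD : {morph poly_mx : p q / p + q}.
Proof.
move=> p q; set N := maxn (size p) (size q).
rewrite !(@poly_mx_wide _ N) ?leq_maxl ?leq_maxr ?(leq_trans (size_polyD _ _)) //.
by rewrite -big_split; apply: eq_bigr => i _; rewrite coefD scalerDl.
Qed.

Lemma poly_mxZ c p : poly_mx (c *: p) = c *: poly_mx p.
Proof.
rewrite (@poly_mx_wide _ (size p)) ?size_scale_leq // scaler_sumr.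
by apply: eq_bigr => i _; rewrite coefZ scalerA.
Qed.

Lemma poly_mx_sum (I : Type) (r : seq I) (F : I -> {poly R}) :
  poly_mx (\sum_(i <- r) F i) = \sum_(i <- r) poly_mx (F i).
Proof. by apply: big_morph; [exact: poly_mxD | rewrite /poly_mx size_poly0 big_ord0]. Qed.

Lemma poly_mx_eigen m (W : 'M[R]_(m, n)) mu p :
  W *m A = mu *: W -> W *m poly_mx p = p.[mu] *: W.
Proof.
move=> WA; have WAk k : W *m A ^+ k = mu ^+ k *: W.
  elim: k => [|k IH]; first by rewrite expr0 mulmx1 scale1r.
  by rewrite exprSr -mulmxE mulmxA IH -scalemxAl WA scalerA exprSr.
rewrite mulmx_sumr horner_coef scaler_suml; apply: eq_bigr => i _.
by rewrite -scalemxAr WAk scalerA.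
Qed.

Lemma trmx_poly_mx p : A^T = A -> (poly_mx p)^T = poly_mx p.
Proof.
move=> A_sym; have trAk k : (A ^+ k)^T = A ^+ k.
  elim: k => [|k IH]; first by rewrite !expr0 tr_scalar_mx.
  by rewrite exprS -mulmxE trmx_mul IH A_sym mulmxE -exprSr exprS.
by rewrite /poly_mx linear_sum; apply: eq_bigr => i _; rewrite linearZ /= trAk.
Qed.

Lemma map_poly_mx (f : {rmorphism R -> R}) p :
  map_mx f A = A -> (forall i, f p`_i = p`_i) -> map_mx f (poly_mx p) = poly_mx p.
Proof.
move=> fA fp; have fAk k : map_mx f (A ^+ k) = A ^+ k.
  elim: k => [|k IH]; first by rewrite !expr0 map_mx1.
  by rewrite exprS -mulmxE map_mxM IH fA.
apply/matrixP => i j; rewrite mxE !(poly_mx_entry _ _ (leqnn _)) rmorph_sum.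
by apply: eq_bigr => k _; rewrite rmorphM fp -[in RHS]fAk mxE.
Qed.

End PolyMx.

Lemma diag_mxM (R : comNzRingType) n (r t : 'rV[R]_n) :
  diag_mx r *m diag_mx t = diag_mx (\row_j (r 0 j * t 0 j)).
Proof.
apply/matrixP => i j; rewrite mul_diag_mx !mxE.
by case: (i == j); rewrite ?mulr1n ?mulr0n ?mulr0.
Qed.

Lemma char_poly_similar (R : comUnitRingType) n (M W : 'M[R]_n) :
  W \in unitmx -> char_poly (invmx W *m M *m W) = char_poly M.
Proof.
move=> W_unit; rewrite /char_poly /char_poly_mx.
set Wp := map_mx polyC W; set Wip := map_mx polyC (invmx W).
have WipWp : Wip *m Wp = 1%:M by rewrite -map_mxM mulVmx // map_mx1.
have -> : 'X%:M - map_mx polyC (invmx W *m M *m W) =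
          Wip *m ('X%:M - map_mx polyC M) *m Wp.
  rewrite mulmxBr mulmxBl !map_mxM -/Wp -/Wip; congr (_ - _).
  by rewrite scalar_mxC -mulmxA WipWp mulmx1.
rewrite !det_mulmx mulrC mulrA -det_mulmx mulmxE -mulmxE -map_mxM mulmxV //.
by rewrite map_mx1 det1 mul1r.
Qed.

Section DiagonalizablePolyMx.
Variables (R : comUnitRingType) (n : nat) (A U : 'M[R]_n) (d : 'rV[R]_n).
Hypotheses (U_unit : U \in unitmx) (A_diag : A = invmx U *m diag_mx d *m U).
Implicit Types p q : {poly R}.

Lemma expmx_diag k : A ^+ k = invmx U *m diag_mx (\row_j d 0 j ^+ k) *m U.
Proof.
elim: k => [|k IH].
  rewrite expr0 (_ : \row_j _ = const_mx 1); last by apply/rowP => j; rewrite !mxE.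
  by rewrite diag_const_mx mulmx1 mulVmx.
rewrite exprS -mulmxE IH {1}A_diag -!mulmxA (mulmxA U) mulmxV // mul1mx.
rewrite !mulmxA -[invmx U *m diag_mx d *m _]mulmxA diag_mxM.
by congr (_ *m diag_mx _ *m _); apply/rowP => j; rewrite !mxE exprS.
Qed.

Lemma poly_mx_diag p : poly_mx A p = invmx U *m diag_mx (\row_j p.[d 0 j]) *m U.
Proof.
rewrite /poly_mx; under eq_bigr do rewrite expmx_diag scalemxAl scalemxAr.
rewrite -mulmx_suml -mulmx_sumr; congr (_ *m _ *m _).
apply/matrixP => a b; rewrite summxE !mxE horner_coef.
have [->|ab] := eqVneq a b; first by apply: eq_bigr => i _; rewrite !mxE eqxx.
by rewrite big1 // => i _; rewrite !mxE (negPf ab) mulr0n mulr0.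
Qed.

Lemma poly_mxM p q : poly_mx A (p * q) = poly_mx A p *m poly_mx A q.
Proof.
rewrite !poly_mx_diag -!mulmxA (mulmxA U) mulmxV // mul1mx (mulmxA (diag_mx _)).
rewrite diag_mxM !mulmxA.
by congr (_ *m diag_mx _ *m _); apply/rowP => j; rewrite !mxE hornerM.
Qed.

Lemma eq_poly_mx p q : (forall j, p.[d 0 j] = q.[d 0 j]) -> poly_mx A p = poly_mx A q.
Proof.
move=> pq; rewrite !poly_mx_diag; congr (_ *m diag_mx _ *m _).
by apply/rowP => j; rewrite !mxE.
Qed.

Lemma mxtrace_expmx_diag k : \tr (A ^+ k) = \sum_j d 0 j ^+ k.
Proof.
rewrite expmx_diag mxtrace_mulC mulmxA mulmxV // mul1mx mxtrace_diag.
by apply: eq_bigr => j _; rewrite mxE.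
Qed.

Lemma char_poly_diag : char_poly A = \prod_j ('X - (d 0 j)%:P).
Proof.
rewrite A_diag char_poly_similar // char_poly_trig ?diag_mx_is_trig //.
by apply: eq_bigr => j _; rewrite mxE eqxx.
Qed.

End DiagonalizablePolyMx.

Local Notation cmx := (map_mx Num.conj).

Section ConjugateMatrix.
Variables m n : nat.
Implicit Type X : 'M[algC]_(m, n).

Lemma cmxK X : cmx (cmx X) = X.
Proof. by apply/matrixP => i j; rewrite !mxE conjCK. Qed.

Lemma cmxM p X (Y : 'M[algC]_(n, p)) : cmx (X *m Y) = cmx X *m cmx Y.
Proof. exact: map_mxM. Qed.

Lemma cmx_trmx X : cmx X^T = (cmx X)^T.
Proof. exact/esym/map_trmx. Qed.

End ConjugateMatrix.

Lemma cmx_invmx n (X : 'M[algC]_n) : cmx (invmx X) = invmx (cmx X).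
Proof. exact: map_invmx. Qed.

Lemma gram_unit m n (B : 'M[algC]_(m, n)) : row_free B -> cmx B *m B^T \in unitmx.
Proof.
move=> B_free; rewrite -row_free_unit -kermx_eq0; apply/rowV0P => v /sub_kermxP vG.
set w := v *m cmx B.
have w0 : w = 0.
  apply/eqP; apply: contraT => /dotmx_is_dotmx; rewrite dotmxE.
  have -> : w *m cmx w^T = 0.
    by rewrite /w trmx_mul cmxM cmx_trmx cmxK mulmxA -(mulmxA v) vG mul0mx.
  by rewrite mxE ltxx.
apply/eqP; rewrite -(mulmx_free_eq0 _ (_ : row_free (cmx B))) -/w ?w0 //.
by rewrite /row_free mxrank_map.
Qed.

(* Both [P := orthproj E] and [Q] are Hermitian, with [P Q = P] and [Q P = Q];
   hence [P = P^* = (P Q)^* = Q P = Q]. *)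
Lemma orthproj_eq (G : graph) (E Q : 'M[algC]_(gn G)) :
  cmx Q^T = Q -> (cmx Q <= E)%MS -> cmx E *m Q = cmx E -> orthproj E = Q.
Proof.
move=> Q_herm QcE EcQ; rewrite /orthproj.
have B_free := row_base_free E; have BE := eq_row_base E.
move: (row_base E) B_free BE => B B_free BE.
set Bc := cmx B; set Gm := Bc *m B^T; set P := B^T *m invmx Gm *m Bc.
have Gm_unit : Gm \in unitmx by exact: gram_unit.
have P_herm : cmx P^T = P.
  rewrite /P /Gm /Bc !trmx_mul !cmxM trmxK trmx_inv cmx_invmx trmx_mul cmxM.
  by rewrite !cmx_trmx !cmxK trmxK !mulmxA.
have PQ : P *m Q = P.
  have /submxP [X BX] : (B <= E)%MS by rewrite BE.
  by rewrite /P /Bc BX cmxM -!mulmxA EcQ.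
have QP : Q *m P = Q.
  have /submxP [Y QcY] : (cmx Q <= B)%MS by rewrite BE.
  have -> : Q = cmx Y *m Bc by rewrite -cmxM -QcY cmxK.
  by rewrite /P !mulmxA -[_ *m Bc *m B^T]mulmxA -/Gm mulmxK.
by rewrite -P_herm -PQ trmx_mul cmxM Q_herm P_herm QP.
Qed.

Section RealSymmetricMatrix.
Variables (n : nat) (A : 'M[algC]_n).
Hypotheses (A_sym : A^T = A) (A_real : cmx A = A).

Local Notation U := (spectralmx A).
Local Notation d := (spectral_diag A).

Lemma realsym_hermsymmx : A \is hermsymmx.
Proof. by rewrite qualifE /= expr0 scale1r A_sym A_real. Qed.

Lemma realsym_spectral : A = invmx U *m diag_mx d *m U.
Proof. exact/orthomx_spectralP/hermitian_normalmx/realsym_hermsymmx. Qed.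

Lemma realsym_spectral_diag_real j : d 0 j \is Num.real.
Proof. exact/mxOverP/hermitian_spectral_diag_real/realsym_hermsymmx. Qed.

Lemma realsym_poly_mx_herm p :
  p \is a polyOver Num.real -> cmx (poly_mx A p)^T = poly_mx A p.
Proof.
move=> /polyOverP p_real; rewrite trmx_poly_mx // map_poly_mx // => i.
exact/CrealP.
Qed.

Variable s : seq algC.
Hypotheses (s_uniq : uniq s) (s_spec : forall j, d 0 j \in s).

Lemma expmx_lagrange k : A ^+ k = \sum_(mu <- s) mu ^+ k *: poly_mx A (lagrange s mu).
Proof.
under eq_bigr do rewrite -poly_mxZ.
rewrite -poly_mx_sum -poly_mxXn.
apply: (eq_poly_mx (spectral_unit A) realsym_spectral) => j.
rewrite hornerXn horner_sum (bigD1_seq (d 0 j)) //= hornerZ lagrange_self mulr1.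
rewrite big1_seq ?addr0 // => mu /andP[mu_dj mus].
by rewrite hornerZ lagrange_other ?mulr0 // eq_sym.
Qed.

Lemma lagrange_mx_eigen mu :
  poly_mx A (lagrange s mu) *m A = mu *: poly_mx A (lagrange s mu).
Proof.
rewrite -[X in _ *m X]expr1 -poly_mxXn -(poly_mxM (spectral_unit A) realsym_spectral).
rewrite -poly_mxZ; apply: (eq_poly_mx (spectral_unit A) realsym_spectral) => j.
rewrite hornerM hornerXn expr1 [RHS]hornerZ.
have [->|dj_mu] := eqVneq (d 0 j) mu; first by rewrite mulrC.
by rewrite lagrange_other ?mul0r ?mulr0.
Qed.

Lemma eigenspace_lagrange_mx mu : mu \is Num.real ->
  cmx (eigenspace A mu) *m poly_mx A (lagrange s mu) = cmx (eigenspace A mu).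
Proof.
move=> mu_real; rewrite (poly_mx_eigen _ _ (mu := mu)) ?lagrange_self ?scale1r //.
have /eigenspaceP EA : (eigenspace A mu <= eigenspace A mu)%MS by [].
by rewrite -[X in _ *m X]A_real -cmxM EA map_mxZ /= (CrealP mu_real).
Qed.

End RealSymmetricMatrix.

Section AdjacencyMatrix.
Variable G : graph.
Local Notation V := ('I_(gn G)).
Local Notation A := (adjmx G).

Lemma adjmx_exp k (x y : V) : (A ^+ k) x y = (nwalks k x y)%:R.
Proof.
elim: k x y => [|k IH] x y; first by rewrite expr0 mxE nwalks0; case: (x == y).
rewrite exprS -mulmxE mxE nwalksS natr_sum; apply: eq_bigr => z _.
by rewrite mxE IH natrM.
Qed.

Lemma adjmx_sym : A^T = A.
Proof. by apply/matrixP => x y; rewrite !mxE gadj_sym. Qed.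

Lemma adjmx_real : cmx A = A.
Proof. by apply/matrixP => x y; rewrite !mxE conjC_nat. Qed.

Lemma nwalks_sym k (x y : V) : nwalks k x y = nwalks k y x.
Proof.
apply/eqP; rewrite -(eqr_nat algC) -!adjmx_exp; apply/eqP.
by rewrite -[in LHS](poly_mxXn A) -trmx_poly_mx ?adjmx_sym // poly_mxXn mxE.
Qed.

End AdjacencyMatrix.

Definition projs_of_walks (s : seq algC) (w : seq nat) : seq algC :=
  [seq \sum_(i < size w) (lagrange s mu)`_i * (nth 0%N w i)%:R | mu <- s].

Section GraphSpectrum.
Variable G : graph.
Local Notation n := (gn G).
Local Notation V := ('I_n).
Local Notation A := (adjmx G).
Local Notation d := (spectral_diag A).
Local Notation eigs := (distinct_eigs G).

Lemma adjmx_spectral : A = invmx (spectralmx A) *m diag_mx d *m spectralmx A.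
Proof. exact: realsym_spectral (adjmx_sym G) (adjmx_real G). Qed.

Definition diag_eigs : seq algC := [seq d 0 j | j <- enum V].

Lemma size_diag_eigs : size diag_eigs = n.
Proof. by rewrite size_map size_enum_ord. Qed.

Lemma char_poly_adjmx : char_poly A = \prod_(mu <- diag_eigs) ('X - mu%:P).
Proof.
by rewrite (char_poly_diag (spectral_unit A) adjmx_spectral) big_map big_enum.
Qed.

Lemma power_sum_diag_eigs k : power_sum diag_eigs k = (\sum_(x : V) nwalks k x x)%N%:R.
Proof.
rewrite /power_sum big_map big_enum /=.
rewrite -(mxtrace_expmx_diag (spectral_unit A) adjmx_spectral) /mxtrace.
by rewrite natr_sum; apply: eq_bigr => x _; rewrite adjmx_exp.
Qed.

Lemma char_poly_spectrum : char_poly A = \prod_(mu <- spectrum G) ('X - mu%:P).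
Proof.
rewrite /spectrum; case: closed_field_poly_normal => r /= ->.
rewrite (monicP (char_poly_monic A)) scale1r; apply/esym/perm_big; exact: perm_mset.
Qed.

Lemma size_spectrum : size (spectrum G) = n.
Proof.
by have := size_char_poly A; rewrite char_poly_spectrum size_prod_XsubC => -[].
Qed.

Lemma mem_distinct_eigs mu : (mu \in eigs) = (mu \in diag_eigs).
Proof.
rewrite /distinct_eigs mem_sort mem_undup -root_prod_XsubC -char_poly_spectrum.
by rewrite char_poly_adjmx root_prod_XsubC.
Qed.

Lemma distinct_eigs_uniq : uniq eigs.
Proof. by rewrite /distinct_eigs sort_uniq undup_uniq. Qed.

Lemma size_distinct_eigs : (size eigs <= n)%N.
Proof.
by rewrite /distinct_eigs size_sort -[X in (_ <= X)%N]size_spectrum size_undup.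
Qed.

Lemma diag_eig_distinct j : d 0 j \in eigs.
Proof. by rewrite mem_distinct_eigs map_f ?mem_enum. Qed.

Lemma distinct_eigs_real : {subset eigs <= Num.real}.
Proof.
move=> mu; rewrite mem_distinct_eigs => /mapP[j _ ->].
exact: realsym_spectral_diag_real (adjmx_sym G) (adjmx_real G) j.
Qed.

Lemma eigproj_lagrange mu : mu \in eigs -> eigproj G mu = poly_mx A (lagrange eigs mu).
Proof.
move=> mu_eig; have mu_real := distinct_eigs_real mu_eig.
have L_real := lagrange_real distinct_eigs_real mu_real.
have A_sym := adjmx_sym G; have A_real := adjmx_real G.
apply: orthproj_eq; first exact: realsym_poly_mx_herm.
  rewrite (map_poly_mx A_real) => [|i]; last exact/CrealP/polyOverP.
  by apply/eigenspaceP; apply: lagrange_mx_eigen distinct_eigs_uniq diag_eig_distinct _.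
exact: eigenspace_lagrange_mx.
Qed.

Lemma Pstar_walks (x y : V) : Pstar x y = projs_of_walks eigs (walk_vector x y).
Proof.
apply/eq_in_map => mu mu_eig; rewrite eigproj_lagrange // size_map size_iota.
rewrite (@poly_mx_entry _ _ A _ n.+1); last first.
  by rewrite (leq_trans (size_lagrange _ _)) // ltnS size_distinct_eigs.
apply: eq_bigr => k _; rewrite adjmx_exp (nth_map 0%N) ?size_iota //.
by rewrite nth_iota.
Qed.

Definition proj_profile (s : seq algC) (p : seq nat * seq (seq nat)) :=
  (projs_of_walks s p.1, mset (map (projs_of_walks s) p.2)).

Lemma Fweak_walk_profiles :
  Fweak G =
  (spectrum G, mset (map (proj_profile eigs) [seq walk_profile x | x <- enum V])).
Proof.
have profile x : (Pstar x x, mset [seq Pstar x y | y <- enum V]) =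
    proj_profile eigs (walk_profile x).
  rewrite /proj_profile /walk_profile; congr (_, _); first exact: Pstar_walks.
  rewrite [(_, _).2]/= mset_map_mset -[in RHS]map_comp.
  by congr mset; apply: eq_map => y; exact: Pstar_walks.
by rewrite /Fweak (eq_map profile) map_comp.
Qed.

Definition walks_of_projs (s : seq algC) (N : nat) (p : seq algC * seq (seq algC)) :=
  [seq \sum_(v <- p.2) \sum_(i < size s) s`_i ^+ k * v`_i | k <- iota 0 N].

Lemma WM_Fweak : mset (map (map (fun m => m%:R)) (WM G)) =
  mset (map (walks_of_projs eigs (size (spectrum G))) (Fweak G).2).
Proof.
rewrite /WM /Fweak /= !mset_map_mset -!map_comp; congr mset; apply: eq_map => x /=.
rewrite size_spectrum -map_comp; apply: eq_map => k /=.
rewrite (perm_big _ (perm_mset _)) big_map big_enum /= /Wm natr_sum.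
apply: eq_bigr => y _; rewrite -adjmx_exp.
have A_sym := adjmx_sym G; have A_real := adjmx_real G.
rewrite (expmx_lagrange A_sym A_real distinct_eigs_uniq diag_eig_distinct).
rewrite summxE (big_nth 0) big_mkord; apply: eq_bigr => i _.
by rewrite mxE (nth_map 0) // eigproj_lagrange // mem_nth.
Qed.

End GraphSpectrum.

(* Only the individualized vertex has a marked colour, so the filtered list
   below is a singleton. *)
Definition colour_profile (l : seq color) : seq nat * seq (seq nat) :=
  let walks t := [seq marked_walks k t | k <- iota 0 (size l).+1] in
  (head [::] [seq walks t | t <- l & marked t], mset (map walks l)).

Section WalkProfiles.
Variable G : graph.
Local Notation n := (gn G).
Local Notation V := ('I_n).

Lemma size_WL32 : size (WL32 G) = n.
Proof. by rewrite size_mset size_map size_enum_ord. Qed.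

Lemma colour_profile_indiv (x : V) : colour_profile (WL1_col (indiv x)) = walk_profile x.
Proof.
rewrite /colour_profile size_mset size_map size_enum_ord.
have walks_refine y : [seq marked_walks k (refine (indiv x) n y) | k <- iota 0 n.+1] =
    walk_vector x y.
  apply/eq_in_map => k; rewrite mem_iota add0n ltnS => kn.
  by rewrite marked_walks_refine // nwalks_sym.
congr (_, _); last by rewrite mset_map_mset -map_comp (eq_map walks_refine).
set l := [seq _ | _ <- _ & _].
suff -> : l = [:: walk_vector x x] by [].
apply: perm_small_eq => //; rewrite /l /WL1_col.
apply: perm_trans (perm_map _ (perm_filter _ (perm_mset _))) _.
rewrite filter_map -map_comp.
have -> : [seq y <- enum V | preim (refine (indiv x) n) marked y] = [:: x].
  rewrite -(filter_pred1_uniq (enum_uniq V) (mem_enum V x)); apply: eq_filter => y /=.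
  by rewrite marked_refine /indiv; case: (y == x).
by rewrite (eq_map walks_refine).
Qed.

Lemma WL32_walk_profiles :
  mset (map colour_profile (WL32 G)) = mset [seq walk_profile x | x <- enum V].
Proof. by rewrite mset_map_mset -map_comp (eq_map colour_profile_indiv). Qed.

End WalkProfiles.

Lemma spectrum_closed_walks (G H : graph) : gn G = gn H ->
  (forall k, (0 < k <= gn G)%N ->
     (\sum_(x : 'I_(gn G)) nwalks k x x = \sum_(x : 'I_(gn H)) nwalks k x x)%N) ->
  spectrum G = spectrum H.
Proof.
move=> nGH closed_walks; rewrite /spectrum !char_poly_adjmx.
congr (mset (sval (closed_field_poly_normal _))).
apply: eq_prod_XsubC_power_sum; first by rewrite !size_diag_eigs.
move=> k /andP[k_gt0 kn]; rewrite !power_sum_diag_eigs closed_walks //.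
by rewrite k_gt0 -(size_diag_eigs G).
Qed.

Theorem corollary4p5 (G H : graph) :
  (WL32 G = WL32 H -> Fweak G = Fweak H) /\ (Fweak G = Fweak H -> WM G = WM H).
Proof.
split=> [WL_GH | F_GH].
- have nGH : gn G = gn H by rewrite -size_WL32 WL_GH size_WL32.
  have profiles : mset [seq walk_profile x | x <- enum 'I_(gn G)] =
                  mset [seq walk_profile x | x <- enum 'I_(gn H)].
    by rewrite -!WL32_walk_profiles WL_GH.
  have spec_GH : spectrum G = spectrum H.
    apply: spectrum_closed_walks => // k /andP[_ kn].
    by rewrite !closed_walks_profiles -?nGH // profiles.
  have eigs_GH : distinct_eigs G = distinct_eigs H by rewrite /distinct_eigs spec_GH.
  by rewrite !Fweak_walk_profiles spec_GH eigs_GH (mset_map _ profiles).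
- have spec_GH : spectrum G = spectrum H by rewrite -[spectrum G]/(Fweak G).1 F_GH.
  have eigs_GH : distinct_eigs G = distinct_eigs H by rewrite /distinct_eigs spec_GH.
  have := WM_Fweak G; rewrite F_GH spec_GH eigs_GH -WM_Fweak /WM !mset_map_mset.
  by apply: mset_map_inj; apply: inj_map => a b /eqP; rewrite eqr_nat => /eqP.
Qed.
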